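(* If $\mathcal{L}$ has finite signature, then the $n$-bisimulation topology $\mathcal{T}_{B}$ is the Stone(-like) topology $\mathcal{T}_{\boldsymbol{\mathcal{L}}_{\Lambda}}$ on $\boldsymbol{X}_{\boldsymbol{\mathcal{L}}_{\Lambda}}$.
   Context: $\mathcal{L}$ is the basic modal language over a countable non-empty set of atoms $\Phi$ and a countable non-empty set of operator indices $\mathcal{I}$ (finite signature: both $\Phi$ and $\mathcal{I}$ finite). $X$ is a set of pointed Kripke models for which modal equivalence and bisimilarity coincide (e.g. image-finite models), and $\Lambda$ is a normal modal logic sound with respect to $X$. $\boldsymbol{X}_{\boldsymbol{\mathcal{L}}_{\Lambda}}$ is the quotient of $X$ under $\Lambda$-equivalence (models identified iff they satisfy the same formulas). The Stone(-like) topology $\mathcal{T}_{\boldsymbol{\mathcal{L}}_{\Lambda}}$ has as basis the sets $\{\boldsymbol{x}\colon x\models\varphi\}$ for $\varphi\in\mathcal{L}$. Writing $x\,\underline{\leftrightarrow}_{n}\,y$ for ''$x$ and $y$ are $n$-bisimilar'', the $n$-bisimulation metric is $d_{B}(\boldsymbol{x},\boldsymbol{y})=0$ if $x\,\underline{\leftrightarrow}_{n}\,y$ for all $n$, and $d_{B}(\boldsymbol{x},\boldsymbol{y})=\frac{1}{n}$ for the least $n$ with $x$ and $y$ not $n$-bisimilar; the $n$-bisimulation topology $\mathcal{T}_{B}$ is its metric topology, with basis the sets $B_{\boldsymbol{x}n}=\{\boldsymbol{y}\colon y\,\underline{\leftrightarrow}_{n}\,x\}$. *)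

From mathcomp Require Import all_boot.
Set Implicit Arguments.
Unset Strict Implicit.
Unset Printing Implicit Defensive.

Section Modal.
Variables (Phi I : Type).

Inductive form : Type :=
| Var : Phi -> form
| Bot : form
| Imp : form -> form -> form
| Box : I -> form -> form.

Record kmodel : Type := KModel {
  world : Type;
  rel : I -> world -> world -> Prop;
  val : Phi -> world -> Prop }.
Arguments rel : clear implicits.
Arguments val : clear implicits.

Definition pointed : Type := { M : kmodel & world M }.

Fixpoint sat (M : kmodel) (w : world M) (f : form) : Prop :=
  match f with
  | Var p => val M p w
  | Bot => False
  | Imp f g => sat w f -> sat w g
  | Box i f => forall v, rel M i w v -> sat v f
  end.

Definition psat (x : pointed) (f : form) : Prop := sat (projT2 x) f.

Definition modeq (x y : pointed) : Prop := forall f, psat x f <-> psat y f.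

Definition bisimilar (x y : pointed) : Prop :=
  exists Z : world (projT1 x) -> world (projT1 y) -> Prop,
    Z (projT2 x) (projT2 y) /\
    (forall u v, Z u v ->
       (forall p, val (projT1 x) p u <-> val (projT1 y) p v) /\
       (forall i u', rel (projT1 x) i u u' -> exists v', rel (projT1 y) i v v' /\ Z u' v') /\
       (forall i v', rel (projT1 y) i v v' -> exists u', rel (projT1 x) i u u' /\ Z u' v')).

Fixpoint nbisimw (n : nat) (M N : kmodel) (u : world M) (v : world N) : Prop :=
  (forall p, val M p u <-> val N p v) /\
  match n with
  | 0 => True
  | S m =>
      (forall i u', rel M i u u' -> exists v', rel N i v v' /\ nbisimw m u' v') /\
      (forall i v', rel N i v v' -> exists u', rel M i u u' /\ nbisimw m u' v')
  end.

Definition nbisim (n : nat) (x y : pointed) : Prop := nbisimw n (projT2 x) (projT2 y).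

Fixpoint peval (v : form -> Prop) (f : form) : Prop :=
  match f with
  | Var p => v (Var p)
  | Bot => False
  | Imp f g => peval v f -> peval v g
  | Box i g => v (Box i g)
  end.

Definition tautology (f : form) : Prop := forall v, peval v f.

Fixpoint subst (s : Phi -> form) (f : form) : form :=
  match f with
  | Var p => s p
  | Bot => Bot
  | Imp f g => Imp (subst s f) (subst s g)
  | Box i g => Box i (subst s g)
  end.

Definition normal_logic (L : form -> Prop) : Prop :=
  (forall f, tautology f -> L f) /\
  (forall i f g, L (Imp (Box i (Imp f g)) (Imp (Box i f) (Box i g)))) /\
  (forall f g, L (Imp f g) -> L f -> L g) /\
  (forall s f, L f -> L (subst s f)) /\
  (forall i f, L f -> L (Box i f)).

Definition sound_wrt (L : form -> Prop) (X : pointed -> Prop) : Prop :=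
  forall f, L f -> forall x, X x -> psat x f.

(* The quotient of X under L-equivalence (identify x,y iff they satisfy the
   same formulas): the type of equivalence classes. *)
Definition quot (X : pointed -> Prop) : Type :=
  { C : pointed -> Prop | exists x, X x /\ C = (fun y => X y /\ modeq x y) }.

Definition gen_open (T : Type) (B : (T -> Prop) -> Prop) (U : T -> Prop) : Prop :=
  forall t, U t -> exists b, B b /\ b t /\ (forall s, b s -> U s).

Definition stone_basis (X : pointed -> Prop) (b : quot X -> Prop) : Prop :=
  exists f, b = (fun c => exists y, proj1_sig c y /\ psat y f).

Definition bisim_basis (X : pointed -> Prop) (b : quot X -> Prop) : Prop :=
  exists x n, X x /\ b = (fun c => exists y, proj1_sig c y /\ nbisim n y x).

Definition stone_open (X : pointed -> Prop) := gen_open (@stone_basis X).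
Definition bisim_open (X : pointed -> Prop) := gen_open (@bisim_basis X).

End Modal.

(* With finitely many atoms and modalities there are only finitely many
   n-bisimilarity types, and each is defined by a single Hintikka formula of
   modal depth n.  Hence every basic set B_{x n} of the n-bisimulation
   topology is a Stone basic set.  Conversely, a formula of depth n is
   invariant under n-bisimilarity, so around any point of its extension
   lies a basic set B_{y n}. *)

From Pilot Require Import Defs.
From mathcomp Require Import all_boot.
From Stdlib Require Import Classical ClassicalEpsilon.

Set Implicit Arguments.
Unset Strict Implicit.
Unset Printing Implicit Defensive.

Section Connectives.
Variables (Phi I : Type).
Implicit Types (f g : form Phi I) (i : I).

Definition Neg f := Imp f (Bot Phi I).
Definition Top := Neg (Bot Phi I).
Definition And f g := Neg (Imp f (Neg g)).
Definition Or f g := Imp (Neg f) g.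
Definition Dia i f := Neg (Box i (Neg f)).

Definition BigAnd (T : Type) (h : T -> form Phi I) (s : seq T) :=
  foldr (fun x acc => And (h x) acc) Top s.
Definition BigOr (T : Type) (h : T -> form Phi I) (s : seq T) :=
  foldr (fun x acc => Or (h x) acc) (Bot Phi I) s.

(* Moss's cover modality: the i-successors are exactly covered by the h x, x in s. *)
Definition Nabla (T : Type) i (h : T -> form Phi I) (s : seq T) :=
  And (Box i (BigOr h s)) (BigAnd (fun x => Dia i (h x)) s).

Fixpoint depth f : nat :=
  match f with
  | Var _ | Bot => 0
  | Imp f g => maxn (depth f) (depth g)
  | Box _ g => (depth g).+1
  end.

Variable M : kmodel Phi I.
Implicit Types w : world M.

Lemma sat_And w f g : sat w (And f g) <-> sat w f /\ sat w g.
Proof. by rewrite /=; split=> [H | [Hf Hg] H]; [split; apply: NNPP; tauto | exact: H]. Qed.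

Lemma sat_Or w f g : sat w (Or f g) <-> sat w f \/ sat w g.
Proof. by rewrite /=; have := classic (sat w f); tauto. Qed.

Lemma sat_Dia w i f : sat w (Dia i f) <-> exists2 v, Defs.rel i w v & sat v f.
Proof.
split=> [H | [v wv Hv] H]; last exact: H wv Hv.
by apply: NNPP => nH; apply: H => v wv Hv; apply: nH; exists v.
Qed.

Lemma sat_BigAnd w (T : eqType) (h : T -> form Phi I) s :
  sat w (BigAnd h s) <-> {in s, forall x, sat w (h x)}.
Proof.
elim: s => [|y s IH]; first by split=> // _ x.
rewrite [BigAnd _ _]/= sat_And IH; split=> [[Hy Hs] x | H].
- by rewrite in_cons => /predU1P [-> | /Hs].
- by split=> [|x xs]; apply: H; rewrite in_cons ?eqxx ?xs ?orbT.
Qed.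

Lemma sat_BigOr w (T : eqType) (h : T -> form Phi I) s :
  sat w (BigOr h s) <-> exists2 x, x \in s & sat w (h x).
Proof.
elim: s => [|y s IH]; first by split=> // [[x]].
rewrite [BigOr _ _]/= sat_Or IH; split=> [[Hy | [x xs Hx]] | [x]].
- by exists y; rewrite ?mem_head.
- by exists x; rewrite // in_cons xs orbT.
- by rewrite in_cons => /predU1P [-> | xs Hx]; [left | right; exists x].
Qed.

Lemma sat_Nabla w (T : eqType) i (h : T -> form Phi I) s :
  sat w (Nabla i h s) <->
  (forall v, Defs.rel i w v -> exists2 x, x \in s & sat v (h x)) /\
  (forall x, x \in s -> exists2 v, Defs.rel i w v & sat v (h x)).
Proof.
rewrite sat_And sat_BigAnd.
by split=> -[Hbox Hdia]; split=> [v /Hbox /sat_BigOr | x /Hdia /sat_Dia].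
Qed.

End Connectives.

Section ModalDepth.
Variables (Phi I : Type).
Implicit Types (f g : form Phi I) (i : I) (n : nat).

Lemma depth_And f g : depth (And f g) = maxn (depth f) (depth g).
Proof. by rewrite /= !maxn0. Qed.

Lemma depth_BigAnd (T : Type) (h : T -> form Phi I) s n :
  (forall x, depth (h x) <= n) -> depth (BigAnd h s) <= n.
Proof. by move=> hn; elim: s => //= x s IH; rewrite !maxn0 geq_max hn. Qed.

Lemma depth_BigOr (T : Type) (h : T -> form Phi I) s n :
  (forall x, depth (h x) <= n) -> depth (BigOr h s) <= n.
Proof. by move=> hn; elim: s => //= x s IH; rewrite maxn0 geq_max hn. Qed.

Lemma depth_Nabla (T : Type) i (h : T -> form Phi I) s n :
  (forall x, depth (h x) <= n) -> depth (Nabla i h s) <= n.+1.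
Proof. by move=> hn; rewrite depth_And geq_max ltnS (depth_BigOr s hn) depth_BigAnd. Qed.

Lemma nbisimw_refl n (M : kmodel Phi I) (u : world M) : nbisimw n u u.
Proof. by elim: n u => [|n IH] u /=; split=> //; split=> i u' uu'; exists u'. Qed.

Lemma nbisimw_sat f n (M N : kmodel Phi I) (u : world M) (v : world N) :
  nbisimw n u v -> depth f <= n -> (sat u f <-> sat v f).
Proof.
elim: f n M N u v => [p | | f IHf g IHg | i f IH] n M N u v uv.
- by case: n uv => [|n] [vals _] _; apply: vals.
- by [].
- rewrite geq_max => /andP [/(IHf _ _ _ _ _ uv) Ef /(IHg _ _ _ _ _ uv) Eg] /=.
  by rewrite Ef Eg.
- case: n uv => [|n] // [_ [forth back]] fn; split=> Hf w' ww'.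
  + by have [u' [uu' /IH/(_ fn) E]] := back i w' ww'; apply/E/Hf.
  + by have [v' [vv' /IH/(_ fn) E]] := forth i w' ww'; apply/E/Hf.
Qed.

End ModalDepth.

Definition truth (P : Prop) : bool := if excluded_middle_informative P then true else false.

Lemma truthP (P : Prop) : reflect P (truth P).
Proof. by rewrite /truth; case: excluded_middle_informative => H; constructor. Qed.

Section Hintikka.
Variables (Phi I : finType).

(* An (n+1)-type records the atoms true at a world and, for each modality, the
   set of n-types realised by its successors. *)
Fixpoint ntype (n : nat) : finType :=
  match n with
  | 0 => {ffun Phi -> bool}
  | m.+1 => ({ffun Phi -> bool} * {ffun I -> {set ntype m}})%type
  end.

Definition literal (a : {ffun Phi -> bool}) (p : Phi) : form Phi I :=
  if a p then Var I p else Neg (Var I p).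

Definition atoms_form (a : {ffun Phi -> bool}) : form Phi I := BigAnd (literal a) (enum Phi).

Fixpoint hintikka (n : nat) : ntype n -> form Phi I :=
  match n return ntype n -> form Phi I with
  | 0 => atoms_form
  | m.+1 => fun t =>
      And (atoms_form t.1) (BigAnd (fun i => Nabla i (@hintikka m) (enum (t.2 i))) (enum I))
  end.

Lemma depth_hintikka n (t : ntype n) : depth (hintikka t) <= n.
Proof.
have depth_atoms a m : depth (atoms_form a) <= m.
  by apply: depth_BigAnd => p; rewrite /literal; case: (a p).
elim: n t => [|n IH] t; first exact: depth_atoms.
by rewrite depth_And geq_max depth_atoms depth_BigAnd // => i; apply: depth_Nabla.
Qed.

Section Satisfaction.
Variable M : kmodel Phi I.
Implicit Types (w : world M).

Lemma sat_atoms_form w a : sat w (atoms_form a) <-> forall p, Defs.val p w <-> a p.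
Proof.
rewrite sat_BigAnd /literal; split=> H p.
- by case: (a p) (H p (mem_enum _ p)) => Hp; split=> // /Hp.
- by case: (a p) (H p) => -[Hp pH] _; [apply: pH | move/Hp].
Qed.

Lemma sat_hintikkaS w n (t : ntype n.+1) :
  sat w (hintikka t) <->
  (forall p, Defs.val p w <-> t.1 p) /\
  forall i,
    (forall v, Defs.rel i w v -> exists2 s, s \in t.2 i & sat v (hintikka s)) /\
    (forall s, s \in t.2 i -> exists2 v, Defs.rel i w v & sat v (hintikka s)).
Proof.
rewrite [hintikka _]/= sat_And sat_atoms_form sat_BigAnd.
split=> -[vals nabla]; split=> // i.
- have /sat_Nabla [forth back] := nabla i (mem_enum _ i).
  split=> [v /forth [s] | s st]; first by rewrite mem_enum; exists s.
  by apply: back; rewrite mem_enum.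
- move=> _; have [forth back] := nabla i; apply/sat_Nabla; split=> [v /forth [s] | s].
  + by exists s; rewrite ?mem_enum.
  + by rewrite mem_enum => /back.
Qed.

Lemma hintikka_exists n w : exists t : ntype n, sat w (hintikka t).
Proof.
pose atoms_at x := [ffun p => truth (@Defs.val _ _ M p x)].
have atoms_atP x p : Defs.val p x <-> atoms_at x p by rewrite ffunE; apply: rwP; apply: truthP.
elim: n w => [|n IH] w; first by exists (atoms_at w); apply/sat_atoms_form; apply: atoms_atP.
pose succ i := [set s | truth (exists2 v, Defs.rel i w v & sat v (@hintikka n s))].
exists (atoms_at w, [ffun i => succ i]); apply/sat_hintikkaS.
split=> [p | i]; first exact: atoms_atP.
rewrite ffunE; split=> [v wv | s]; last by rewrite inE => /truthP.
by have [s vs] := IH v; exists s; rewrite // inE; apply/truthP; exists v.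
Qed.

End Satisfaction.

Lemma hintikka_nbisimw n (M N : kmodel Phi I) (u : world M) (v : world N) (t : ntype n) :
  sat u (hintikka t) -> sat v (hintikka t) -> nbisimw n u v.
Proof.
elim: n u v t => [|n IH] u v t.
  by move=> /sat_atoms_form Hu /sat_atoms_form Hv; split=> // p; rewrite Hu Hv.
move=> /sat_hintikkaS [Hu nu] /sat_hintikkaS [Hv nv].
split; first by move=> p; rewrite Hu Hv.
split=> i.
- move=> u' /(nu i).1 [s st u's]; have [v' vv' v's] := (nv i).2 s st.
  by exists v'; split; last exact: IH u's v's.
- move=> v' /(nv i).1 [s st v's]; have [u' uu' u's] := (nu i).2 s st.
  by exists u'; split; last exact: IH u's v's.
Qed.

Lemma sat_hintikka_nbisimw n (M N : kmodel Phi I) (u : world M) (v : world N) (t : ntype n) :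
  sat v (hintikka t) -> (sat u (hintikka t) <-> nbisimw n u v).
Proof.
move=> Hv; split=> [Hu | uv]; first exact: hintikka_nbisimw Hu Hv.
exact: (nbisimw_sat uv (depth_hintikka t)).2 Hv.
Qed.

End Hintikka.

Lemma gen_open_refine (T : Type) (B B' : (T -> Prop) -> Prop) :
  (forall b t, B b -> b t -> exists b', B' b' /\ b' t /\ (forall s, b' s -> b s)) ->
  forall U, gen_open B U -> gen_open B' U.
Proof.
move=> refine U UB t Ut; have [b [Bb [bt bU]]] := UB t Ut.
have [b' [B'b' [b't b'b]]] := refine b t Bb bt.
by exists b'; split; last split=> // s /b'b /bU.
Qed.

Lemma quot_memP (Phi I : Type) (X : pointed Phi I -> Prop) (c : quot X) y :
  proj1_sig c y -> X y.
Proof. by case: c => C [x [_ EC]] /=; rewrite EC => -[]. Qed.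

Section Bases.
Variables (Phi I : finType) (X : pointed Phi I -> Prop).

Lemma bisim_basis_refined (b : quot X -> Prop) c :
  bisim_basis b -> b c ->
  exists b', stone_basis b' /\ b' c /\ (forall d, b' d -> b d).
Proof.
move=> [x [n [_ ->]]] [y [cy yx]].
have [t xt] := hintikka_exists n (projT2 x).
exists (fun d => exists z, proj1_sig d z /\ psat z (hintikka t)).
split; first by exists (hintikka t).
split; first by exists y; split; last exact/(sat_hintikka_nbisimw _ xt).
by move=> d [z [dz zt]]; exists z; split; last exact/(sat_hintikka_nbisimw _ xt).
Qed.

Lemma stone_basis_refined (b : quot X -> Prop) c :
  stone_basis b -> b c ->
  exists b', bisim_basis b' /\ b' c /\ (forall d, b' d -> b d).
Proof.
move=> [f ->] [y [cy yf]].
exists (fun d => exists z, proj1_sig d z /\ nbisim (depth f) z y).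
split; first by exists y, (depth f); split; first exact: quot_memP cy.
split; first by exists y; split; last exact: nbisimw_refl.
by move=> d [z [dz zy]]; exists z; split; last exact/(nbisimw_sat zy).
Qed.

End Bases.

Theorem corollary27 (Phi I : finType) (Phi_ne : inhabited Phi) (I_ne : inhabited I)
  (X : pointed Phi I -> Prop)
  (HX : forall x y, X x -> X y -> (modeq x y <-> bisimilar x y))
  (L : form Phi I -> Prop) (HL : normal_logic L) (Hsound : sound_wrt L X) :
  forall U : quot X -> Prop, bisim_open U <-> stone_open U.
Proof.
move=> U; split; apply: gen_open_refine => b c.
- exact: bisim_basis_refined.
- exact: stone_basis_refined.
Qed.
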